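(* Let $\mathbb{K}$ be a field, let $\{i,j,k\}=\{1,2,3\}$, let $R=\mathbb{K}[x_i,x_j,x_k]$ with homogeneous maximal ideal $\mathfrak{m}=\langle x_i,x_j,x_k\rangle$, and let $I\subseteq R$ be a support-$2$ monomial ideal such that $G(I)$ is the $3$-cycle on $x_i,x_j,x_k$. Then: (a) if $\alpha_{i,j}\ge 2$ and $\alpha_{j,k}\ge 2$, then $\mathfrak{m}\in\mathrm{Ass}(I)$; (b) if $\alpha_{i,k}=\alpha_{j,k}=1$ and $\alpha_{i,j}\ge 2$, then $\mathfrak{m}\notin\mathrm{Ass}(I)$ if and only if $w^1_{i,k}\ge\mu_{i,j}$ and $w^1_{j,k}\ge\mu_{j,i}$.
   Context: For a monomial ideal $I$, $\mathcal{G}(I)$ denotes its minimal set of monomial generators. $I$ is a support-$2$ monomial ideal if every element of $\mathcal{G}(I)$ has the form $x_a^{p}x_b^{q}$ with $a\neq b$ and $p,q\ge 1$. The underlying simple graph $G(I)$ has an edge $\{x_a,x_b\}$ whenever some element of $\mathcal{G}(I)$ has support $\{x_a,x_b\}$. For an edge $\{x_a,x_b\}$, $\alpha_{a,b}=\alpha_{b,a}$ is the number of elements of $\mathcal{G}(I)$ with support exactly $\{x_a,x_b\}$, and $\mu_{a,b}$ is the maximum exponent of $x_a$ among them. When $\alpha_{a,b}=1$, $w^1_{a,b}$ denotes the exponent of $x_a$ in the unique element of $\mathcal{G}(I)$ with support $\{x_a,x_b\}$. $\mathrm{Ass}(I)$ is the set of associated primes of $R/I$. *)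

From mathcomp Require Import all_boot all_order all_algebra.
From mathcomp Require Import mpoly.
Set Implicit Arguments. Unset Strict Implicit. Unset Printing Implicit Defensive.
Import GRing.Theory.
Local Open Scope ring_scope.

(* A monomial of K[x_1,x_2,x_3] is represented by its exponent vector 'X_{1..3};
   variables are indexed by 'I_3.  The polynomial monomial is 'X_[m]. *)

Definition in_mon_ideal (K : fieldType) (G : seq 'X_{1..3}) (f : {mpoly K[3]}) : Prop :=
  exists c : 'X_{1..3} -> {mpoly K[3]}, f = \sum_(m <- G) c m * 'X_[m].

Definition max_ideal_gens : seq 'X_{1..3} := [seq U_(a)%MM | a <- enum 'I_3].

Definition is_ass_prime (K : fieldType) (I P : {mpoly K[3]} -> Prop) : Prop :=
  exists f : {mpoly K[3]}, forall g : {mpoly K[3]}, I (g * f) <-> P g.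

Definition msupp (m : 'X_{1..3}) : pred 'I_3 := [pred a | m a != 0%N].

Definition support2_min_gens (G : seq 'X_{1..3}) : Prop :=
  uniq G /\
  (forall m1 m2, m1 \in G -> m2 \in G -> (m1 <= m2)%MM -> m1 = m2) /\
  (forall m, m \in G -> #|msupp m| = 2%N).

Definition gens_on (G : seq 'X_{1..3}) (a b : 'I_3) : seq 'X_{1..3} :=
  [seq m : 'X_{1..3} <- G | [forall c : 'I_3, (m c != 0%N) == ((c == a) || (c == b))]].

Definition is_edge (G : seq 'X_{1..3}) (a b : 'I_3) : Prop :=
  a != b /\ gens_on G a b != [::].

Definition alpha (G : seq 'X_{1..3}) (a b : 'I_3) : nat := size (gens_on G a b).

Definition mu (G : seq 'X_{1..3}) (a b : 'I_3) : nat :=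
  \max_(m <- gens_on G a b) m a.

(* w^1_{a,b}: exponent of x_a in the (unique, when alpha_{a,b} = 1) generator
   with support {x_a,x_b} *)
Definition w1 (G : seq 'X_{1..3}) (a b : 'I_3) : nat :=
  (head 0%MM (gens_on G a b)) a.

(* A monomial ideal I of K[x_i,x_j,x_k] has m as an associated prime iff some monomial
   u lies outside I while x_a u lies in I for every variable a; f = x^u then has
   (I : f) = m, and conversely a support monomial of such an f outside I is such a u.
   Such a u exists as soon as some u outside I can be pushed into I along each of the three
   coordinate rays: raise one exponent at a time to the last value staying outside I.
   Starting points come from a thick edge {p,q}: if g is its generator of largest
   p-exponent mu_{p,q}, the corner u = x_p^(mu-1) x_q^(g_q) lies below g without being g,
   hence outside I, and g and another generator of the edge push it along x_p and x_q.
   Along x_r any generator f with f_p < mu and f_q <= g_q will do: in (a) the top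
   generator of the other thick edge whose x_j-exponent is smaller, in (b) the generator
   of the edge {p,r} when w^1_{p,r} < mu_{p,q}.  Conversely, in (b) let u be a socle
   monomial and g a generator dividing x_k u; g contains x_k, so it lies on the edge
   {p,k} for p in {i,j}, and then the generator dividing x_p u must have p-exponent
   larger than u_p >= w^1_{p,k} >= mu_{p,q}, which neither edge through x_p allows. *)

From Pilot Require Import Defs.
From mathcomp Require Import all_boot all_order all_algebra.
From mathcomp Require Import mpoly.
Set Implicit Arguments. Unset Strict Implicit. Unset Printing Implicit Defensive.
Import GRing.Theory.

Lemma exists_neq_uniq (T : eqType) (s : seq T) x :
  uniq s -> (2 <= size s)%N -> exists2 y, y \in s & y != x.
Proof.
move=> us s2; apply/hasP; apply: contraTT s2 => /hasPn sx; rewrite -ltnNge ltnS.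
by apply: (uniq_leq_size (s2 := [:: x])) => // y /sx; rewrite inE negbK.
Qed.

Lemma exists_bigmax_seq (T : eqType) (s : seq T) (F : T -> nat) :
  s != [::] -> exists2 x, x \in s & (\max_(y <- s) F y)%N = F x.
Proof.
elim: s => // x s IH _; rewrite big_cons.
have [->|/IH[y ys ->]] := eqVneq s [::]; first by exists x; rewrite ?mem_head ?big_nil ?maxn0.
(* [leqP] also rewrites the [maxn] in the goal. *)
by have [yx|xy] := leqP (F y) (F x); [exists x|exists y]; rewrite ?inE ?eqxx ?ys ?orbT.
Qed.

Section MonomialIdeal.
Variable n : nat.
Implicit Types (G : seq 'X_{1..n}) (u w g m : 'X_{1..n}) (a : 'I_n).

Definition mnm_in_ideal G u : bool := has (fun g => (g <= u)%MM) G.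

Definition ray_meets G u a : bool :=
  has (fun g => [forall c, (c != a) ==> (g c <= u c)]) G.

Definition socle_mnm G u : bool :=
  ~~ mnm_in_ideal G u && [forall a, mnm_in_ideal G (u + U_(a))%MM].

Lemma mnm_in_ideal_le G u w : mnm_in_ideal G u -> (u <= w)%MM -> mnm_in_ideal G w.
Proof.
by case/hasP=> g gG gu uw; apply/hasP; exists g => //; apply: lepm_trans uw.
Qed.

Lemma ray_meets_le G u w a : ray_meets G u a -> (u <= w)%MM -> ray_meets G w a.
Proof.
case/hasP=> g gG /forall_inP gu /mnm_lepP uw; apply/hasP; exists g => //.
by apply/forall_inP=> c ca; apply: leq_trans (gu c ca) (uw c).
Qed.

Lemma ray_meets_boundary G u a : ~~ mnm_in_ideal G u -> ray_meets G u a ->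
  exists k, ~~ mnm_in_ideal G (u + U_(a) *+ k) && mnm_in_ideal G (u + U_(a) *+ k.+1).
Proof.
move=> uI /hasP[g gG /forall_inP gu].
have : exists k, mnm_in_ideal G (u + U_(a) *+ k)%MM.
  exists (g a); apply/hasP; exists g => //; apply/mnm_lepP=> c.
  rewrite mnmDE mulmnE mnm1E; have [<-|ac] := eqVneq a c.
    by rewrite mul1n leq_addl.
  by rewrite mul0n addn0 gu // eq_sym.
case/ex_minnP=> -[|k] Ik kmin; first by rewrite mulm0n addm0 (negbTE uI) in Ik.
by exists k; rewrite Ik andbT; apply/negP=> /kmin; rewrite ltnn.
Qed.

Lemma exists_socle_mnm G u : ~~ mnm_in_ideal G u -> (forall a, ray_meets G u a) ->
  exists w, socle_mnm G w.
Proof.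
move=> uI rays.
suff [w [_ wI wsoc]] : exists w, [/\ (u <= w)%MM, ~~ mnm_in_ideal G w &
    all (fun a => mnm_in_ideal G (w + U_(a))) (enum 'I_n)].
  by exists w; rewrite /socle_mnm wI; apply/forallP=> a; apply: (allP wsoc); rewrite mem_enum.
elim: (enum 'I_n) => [|a s [w [uw wI wsoc]]]; first by exists u; rewrite lepm_refl.
have [k /andP[wkI wkI1]] := ray_meets_boundary wI (ray_meets_le (rays a) uw).
exists (w + U_(a) *+ k)%MM; split=> //; first exact: lepm_trans uw (lem_addr _ _).
rewrite /= -addmA -mulmSr wkI1; apply/allP=> b bs.
apply: mnm_in_ideal_le (allP wsoc b bs) _.
by apply/mnm_lepP=> c; rewrite !mnmDE leq_add2r leq_addr.
Qed.

Definition var_gens : seq 'X_{1..n} := [seq U_(a)%MM | a <- enum 'I_n].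

Lemma mnm_in_var_gens m : mnm_in_ideal var_gens m = (m != 0%MM).
Proof.
apply/hasP/idP=> [[_ /mapP[a _ ->] /mnm_lepP/(_ a)]|m0].
  by rewrite mnm1E eqxx; apply: contraTneq => ->; rewrite mnmE.
have [a ma] : exists a, m a != 0%N.
  apply/existsP; apply: contraNT m0; rewrite negb_exists => /forallP m0.
  by apply/eqP/mnmP=> a; rewrite mnmE; apply/eqP/negPn/m0.
exists U_(a)%MM; first by apply/mapP; exists a; rewrite ?mem_enum.
by apply/mnm_lepP=> b; rewrite mnm1E; case: eqP => [<-|]; rewrite ?lt0n.
Qed.

Lemma socle_mnm_addP G u m : socle_mnm G u -> mnm_in_ideal G (u + m) = (m != 0%MM).
Proof.
case/andP=> uI /forallP uaI; have [->|] := eqVneq m 0%MM; first by rewrite addm0 (negbTE uI).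
rewrite -mnm_in_var_gens => /hasP[_ /mapP[a _ ->] am].
by apply: mnm_in_ideal_le (uaI a) _; apply/mnm_lepP=> c; rewrite !mnmDE leq_add2l (mnm_lepP am).
Qed.

Lemma lepm_add1_gt u g a : (g <= u + U_(a))%MM -> ~~ (g <= u)%MM -> (u a < g a)%N.
Proof.
move/mnm_lepP=> gua; apply: contraR; rewrite -leqNgt => gau; apply/mnm_lepP=> c.
have [<-//|ac] := eqVneq a c.
by move: (gua c); rewrite mnmDE mnm1E (negbTE ac) addn0.
Qed.

Lemma lepm_add1_ne u g a c : (g <= u + U_(a))%MM -> c != a -> (g c <= u c)%N.
Proof. by move/mnm_lepP/(_ c)=> + ca; rewrite mnmDE mnm1E eq_sym (negbTE ca) addn0. Qed.

End MonomialIdeal.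

Section MonomialIdealMembership.
Local Open Scope ring_scope.
Variable K : fieldType.
Implicit Types (G : seq 'X_{1..3}) (f h : {mpoly K[3]}) (u : 'X_{1..3}).

Lemma in_mon_ideal_sum G (s : seq 'X_{1..3}) (F : 'X_{1..3} -> {mpoly K[3]}) :
  (forall m, m \in s -> in_mon_ideal G (F m)) -> in_mon_ideal G (\sum_(m <- s) F m).
Proof.
move=> IF; rewrite big_seq; apply: big_ind => [|_ _ [c1 ->] [c2 ->]|]; last exact: IF.
  by exists (fun _ => 0); rewrite big1 // => m _; rewrite mul0r.
by exists (fun m => c1 m + c2 m); rewrite -big_split; apply: eq_bigr => m _; rewrite mulrDl.
Qed.

Lemma in_mon_idealMl G f h : in_mon_ideal G f -> in_mon_ideal G (h * f).
Proof.
case=> c ->; exists (fun m => h * c m).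
by rewrite mulr_sumr; apply: eq_bigr => m _; rewrite mulrA.
Qed.

Lemma mcoeff_in_mon_ideal G f u : in_mon_ideal G f -> f@_u != 0 -> mnm_in_ideal G u.
Proof.
case=> c ->; apply: contraNT => /hasPn uI; rewrite raddf_sum /=.
apply/eqP/big1_seq => m /andP[_ mG]; apply/eqP; rewrite mcoeff_eq0.
rewrite (perm_mem (msuppMX (c m) m)); apply/mapP=> -[m' _ um].
by move: (uI m mG); rewrite um lem_addr.
Qed.

Lemma in_mon_idealX G u :
  uniq G -> mnm_in_ideal G u -> in_mon_ideal G ('X_[u] : {mpoly K[3]}).
Proof.
move=> uniqG /hasP[g gG gu]; exists (fun m => if m == g then 'X_[u - g] else 0).
rewrite (bigD1_seq g) //= eqxx big1 => [|m /negbTE ->]; last by rewrite mul0r.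
by rewrite addr0 -mpolyXD submK.
Qed.

Lemma in_mon_idealP G f : uniq G -> in_mon_ideal G f <-> all (mnm_in_ideal G) (msupp f).
Proof.
move=> uniqG; split=> [If|/allP fI].
  by apply/allP=> u; rewrite mcoeff_msupp; apply: mcoeff_in_mon_ideal.
rewrite (mpolyE f); apply: in_mon_ideal_sum => m /fI mI.
by rewrite -mul_mpolyC; apply/in_mon_idealMl/in_mon_idealX.
Qed.

Lemma in_max_idealP f : in_mon_ideal max_ideal_gens f <-> f@_0%MM = 0.
Proof.
have uniq_max : uniq max_ideal_gens.
  rewrite map_inj_uniq ?enum_uniq // => a b /mnmP /(_ a).
  by rewrite !mnm1E eqxx; case: eqP.
rewrite in_mon_idealP //; split=> [/allP f0|f0].
  by apply/eqP; apply: contraT; rewrite -mcoeff_msupp => /f0; rewrite mnm_in_var_gens eqxx.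
by apply/allP=> m; rewrite mnm_in_var_gens mcoeff_msupp; apply: contraNneq => ->; rewrite f0.
Qed.

Lemma ass_max_idealP G : uniq G ->
  is_ass_prime (in_mon_ideal G) (in_mon_ideal (K := K) max_ideal_gens) <->
  exists u, socle_mnm G u.
Proof.
move=> uniqG; split=> [[f colon]|[u socu]].
  have : ~~ all (mnm_in_ideal G) (msupp f).
    apply/negP; rewrite -in_mon_idealP // -[f]mul1r colon in_max_idealP.
    by rewrite mcoeff1 eqxx; apply/eqP; rewrite oner_eq0.
  rewrite -has_predC => /hasP[u fu /= uI]; exists u; rewrite /socle_mnm uI /=.
  apply/forallP=> a; have /colon : in_mon_ideal max_ideal_gens ('X_[U_(a)] : {mpoly K[3]}).
    by rewrite in_max_idealP mcoeffX mnm1_eq0.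
  move/mcoeff_in_mon_ideal; apply; rewrite mulrC addmC mcoeffMX -mcoeff_msupp //.
exists 'X_[u] => g; rewrite in_mon_idealP // in_max_idealP (perm_all _ (msuppMX g u)) all_map.
rewrite (eq_all (a2 := predC1 0%MM)) => [|m]; last exact: socle_mnm_addP.
by rewrite all_predC has_pred1 mcoeff_msupp negbK; split=> /eqP.
Qed.

End MonomialIdealMembership.

Definition distinct3 (p q r : 'I_3) := [&& p != q, q != r & p != r].

Lemma distinct3_swap p q r : distinct3 p q r -> distinct3 q p r.
Proof. by case/and3P=> pq qr pr; apply/and3P; split; rewrite // eq_sym. Qed.

Lemma distinct3_rotate p q r : distinct3 p q r -> distinct3 q r p.
Proof. by case/and3P=> pq qr pr; apply/and3P; split; rewrite // eq_sym. Qed.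

Lemma distinct3_swap23 p q r : distinct3 p q r -> distinct3 p r q.
Proof. by move/distinct3_swap/distinct3_rotate. Qed.

Section ThreeVariables.
Variables p q r : 'I_3.
Hypothesis pqr : distinct3 p q r.

Lemma ord3_cases c : [|| c == p, c == q | c == r].
Proof.
case/and3P: pqr; move: p q r c.
by do 4![case=> [[|[|[|?]]] ?] //].
Qed.

Lemma lepm3 (m1 m2 : 'X_{1..3}) :
  (m1 p <= m2 p)%N -> (m1 q <= m2 q)%N -> (m1 r <= m2 r)%N -> (m1 <= m2)%MM.
Proof. by move=> lp lq lr; apply/mnm_lepP=> c; case/or3P: (ord3_cases c) => /eqP->. Qed.

Lemma sum_ord3 (F : 'I_3 -> nat) : (\sum_c F c = F p + F q + F r)%N.
Proof.
have e : perm_eq (index_enum 'I_3) [:: p; q; r].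
  apply: uniq_perm => [||c]; first exact: index_enum_uniq.
    by case/and3P: pqr => pq qr pr; rewrite /= !inE negb_or pq pr qr.
  by rewrite mem_index_enum !inE ord3_cases.
by rewrite (perm_big _ e) !big_cons big_nil /= addn0 addnA.
Qed.

Lemma card_msupp3 (m : 'X_{1..3}) :
  #|Defs.msupp m| = ((m p != 0%N) + (m q != 0%N) + (m r != 0%N))%N.
Proof. by rewrite -sum1_card big_mkcond sum_ord3 !inE; do 3 case: (_ != 0%N). Qed.

End ThreeVariables.

Section Support2.
Variable G : seq 'X_{1..3}.
Hypothesis G2 : support2_min_gens G.

Lemma gens_on_sym p q : gens_on G p q = gens_on G q p.
Proof. by apply: eq_filter => m; apply: eq_forallb => c; rewrite orbC. Qed.

Lemma min_gens_eq g h : g \in G -> h \in G -> (g <= h)%MM -> g = h.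
Proof. by case: G2 => _ [+ _]; apply. Qed.

Lemma mem_gens_on p q r g : distinct3 p q r ->
  (g \in gens_on G p q) = [&& g \in G, g p != 0%N, g q != 0%N & g r == 0%N].
Proof.
move=> pqr; case/and3P: (pqr) => pq qr pr; rewrite mem_filter andbC; congr (_ && _).
apply/forallP/and3P=> [gpqr|[gp gq gr] c].
  move: (gpqr p) (gpqr q) (gpqr r); rewrite !eqxx orbT ![r == _]eq_sym.
  by rewrite (negbTE pr) (negbTE qr) => /eqP-> /eqP-> /eqP/negbFE.
by case/or3P: (ord3_cases pqr c) => /eqP->; rewrite ?eqxx ?orbT ?gp ?gq ?gr //
  ![r == _]eq_sym (negbTE pr) (negbTE qr).
Qed.

Lemma gens_on_of_zero p q r g : distinct3 p q r -> g \in G -> g r = 0%N -> g \in gens_on G p q.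
Proof.
move=> pqr; case: G2 => _ [_ card2] gG gr; rewrite (mem_gens_on _ pqr) gG gr eqxx andbT /=.
by move: (card2 g gG); rewrite (card_msupp3 pqr) gr /=; do 2 case: (_ != 0%N).
Qed.

Lemma gens_on_of_nonzero p q r g : distinct3 p q r ->
  g \in G -> g r != 0%N -> g \in gens_on G p r \/ g \in gens_on G q r.
Proof.
move=> pqr gG gr; have [gp|gp] := eqVneq (g p) 0%N.
  by right; apply: gens_on_of_zero (distinct3_rotate pqr) gG gp.
left; rewrite (mem_gens_on _ (distinct3_swap23 pqr)) gG gp gr /=.
case: G2 => _ [_ /(_ g gG)]; rewrite (card_msupp3 pqr) gp gr /=.
by case: (g q) => // k; rewrite addn1.
Qed.

Lemma ray_meets3 p q r (u g : 'X_{1..3}) : distinct3 p q r ->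
  g \in G -> (g q <= u q)%N -> (g r <= u r)%N -> ray_meets G u p.
Proof.
move=> pqr gG gq gr; apply/hasP; exists g => //; apply/forall_inP=> c.
by case/or3P: (ord3_cases pqr c) => /eqP->; rewrite ?eqxx.
Qed.

Definition edge_corner (p q : 'I_3) (g : 'X_{1..3}) : 'X_{1..3} :=
  (U_(p) *+ (g p).-1 + U_(q) *+ g q)%MM.

Lemma edge_cornerE p q r g : distinct3 p q r ->
  [/\ edge_corner p q g p = (g p).-1, edge_corner p q g q = g q & edge_corner p q g r = 0%N].
Proof.
case/and3P=> pq qr pr; rewrite !mnmDE !mulmnE !mnm1E eqxx (negbTE pq) eq_sym (negbTE pq).
by rewrite eqxx (negbTE pr) (negbTE qr) /= !mul1n !mul0n addn0.
Qed.

Lemma edge_corner_notin p q r g : distinct3 p q r ->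
  g \in G -> g p != 0%N -> g r = 0%N -> ~~ mnm_in_ideal G (edge_corner p q g).
Proof.
move=> pqr gG gp0 gr; have [up uq ur] := edge_cornerE g pqr.
apply/hasP=> -[h hG hu].
have ug : (edge_corner p q g <= g)%MM by apply: (lepm3 pqr); rewrite ?up ?uq ?ur ?leq_pred.
have hg : h = g by apply: min_gens_eq hG gG (lepm_trans hu ug).
by move/mnm_lepP: hu => /(_ p); rewrite hg up; case: (g p) gp0 => // m _; rewrite ltnn.
Qed.

Lemma exists_gen_below_mu p q r g : distinct3 p q r -> (2 <= alpha G p q)%N ->
  g \in gens_on G p q -> g p = mu G p q -> exists2 h, h \in gens_on G p q & (h p < g p)%N.
Proof.
move=> pqr alpha2 gpq gmax; have [h hpq hg] := exists_neq_uniq g (filter_uniq _ G2.1) alpha2.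
exists h => //; have hmu : (h p <= g p)%N.
  by rewrite gmax; exact: (leq_bigmax_seq (F := fun m : 'X_{1..3} => m p) h hpq).
rewrite ltn_neqAle hmu andbT; apply: contra hg => /eqP hgp.
move: gpq hpq; rewrite !(mem_gens_on _ pqr) => /and4P[gG _ _ /eqP gr] /and4P[hG _ _ /eqP hr].
have [hgq|/ltnW ghq] := leqP (h q) (g q); apply/eqP.
  by apply: min_gens_eq hG gG _; apply: (lepm3 pqr); rewrite ?hgp ?hr.
by apply/esym/(min_gens_eq gG hG); apply: (lepm3 pqr); rewrite ?hgp ?gr.
Qed.

Lemma socle_from_corner p q r g f : distinct3 p q r ->
  (2 <= alpha G p q)%N -> g \in gens_on G p q -> g p = mu G p q ->
  f \in G -> (f p < g p)%N -> (f q <= g q)%N -> exists w, socle_mnm G w.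
Proof.
move=> pqr alpha2 gpq gmax fG fp fq.
have [h hpq hp] := exists_gen_below_mu pqr alpha2 gpq gmax.
move: gpq hpq; rewrite !(mem_gens_on _ pqr) => /and4P[gG gp0 _ /eqP gr] /and4P[hG _ _ /eqP hr].
have [up uq ur] := edge_cornerE g pqr.
have below_up x : (x < g p)%N -> (x <= edge_corner p q g p)%N by rewrite up; case: (g p).
apply: (exists_socle_mnm (edge_corner_notin pqr gG gp0 gr)) => a.
case/or3P: (ord3_cases pqr a) => /eqP->.
- by apply: (ray_meets3 pqr gG); rewrite ?uq ?gr.
- by apply: (ray_meets3 (distinct3_swap pqr) hG (below_up _ hp)); rewrite hr.
- by apply: (ray_meets3 (distinct3_rotate (distinct3_rotate pqr)) fG (below_up _ fp)); rewrite uq.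
Qed.

Lemma exists_mu_gen p q :
  gens_on G p q != [::] -> exists2 g, g \in gens_on G p q & g p = mu G p q.
Proof. by move/(exists_bigmax_seq (fun m : 'X_{1..3} => m p))=> [g gpq gmax]; exists g. Qed.

Lemma socle_of_thick_path i j k : distinct3 i j k ->
  (2 <= alpha G i j)%N -> (2 <= alpha G j k)%N -> exists w, socle_mnm G w.
Proof.
move=> ijk alpha_ij alpha_jk; have kji := distinct3_rotate (distinct3_swap23 ijk).
have alpha_kj : (2 <= alpha G k j)%N by rewrite /alpha gens_on_sym.
have [g gij gmax] : exists2 g, g \in gens_on G i j & g i = mu G i j.
  by apply: exists_mu_gen; rewrite -size_eq0 -lt0n; apply: ltnW.
have [h hkj hmax] : exists2 h, h \in gens_on G k j & h k = mu G k j.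
  by apply: exists_mu_gen; rewrite -size_eq0 -lt0n; apply: ltnW.
move: (gij) (hkj); rewrite (mem_gens_on _ ijk) (mem_gens_on _ kji).
case/and4P=> gG gi _ /eqP gk /and4P[hG hk _ /eqP hi].
have [hg|/ltnW gh] := leqP (h j) (g j).
  by apply: socle_from_corner ijk alpha_ij gij gmax hG _ hg; rewrite hi lt0n.
by apply: socle_from_corner kji alpha_kj hkj hmax gG _ gh; rewrite gk lt0n.
Qed.

Lemma socle_of_w1_lt_mu p q r : distinct3 p q r -> (2 <= alpha G p q)%N ->
  gens_on G p r != [::] -> (w1 G p r < mu G p q)%N -> exists w, socle_mnm G w.
Proof.
move=> pqr alpha2 pr_edge w1_lt.
have [g gpq gmax] : exists2 g, g \in gens_on G p q & g p = mu G p q.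
  by apply: exists_mu_gen; rewrite -size_eq0 -lt0n; apply: ltnW.
set f : 'X_{1..3} := head 0%MM (gens_on G p r).
have : f \in gens_on G p r.
  by rewrite /f; case: (gens_on G p r) pr_edge => // ? ? _; apply: mem_head.
rewrite (mem_gens_on _ (distinct3_swap23 pqr)) => /and4P[fG _ _ /eqP fq].
apply: (socle_from_corner pqr alpha2 gpq gmax fG); last by rewrite fq.
by rewrite gmax; exact: w1_lt.
Qed.

Lemma socle_edge_gen_not_le p q r u g : distinct3 p q r -> socle_mnm G u ->
  alpha G p r = 1%N -> (mu G p q <= w1 G p r)%N -> g \in gens_on G p r ->
  ~~ (g <= u + U_(r))%MM.
Proof.
move=> pqr /andP[uI /forallP uaI] alpha1 mu_le gpr; apply/negP=> gu.
case/and3P: (pqr) => _ _ pr.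
have gG : g \in G by move: gpr; rewrite mem_filter => /andP[].
have pr_gens : gens_on G p r = [:: g].
  move: alpha1 gpr; rewrite /alpha; case: (gens_on G p r) => [|x [|]] // _.
  by rewrite inE => /eqP->.
have w1g : w1 G p r = g p by rewrite /w1 pr_gens.
have gr := lepm_add1_gt gu (hasPn uI g gG).
have gp := lepm_add1_ne gu pr.
case/hasP: (uaI p) => h hG hu.
have hp := lepm_add1_gt hu (hasPn uI h hG).
have hr : (h r <= u r)%N by apply: lepm_add1_ne hu _; rewrite eq_sym.
have hp0 : h p != 0%N by rewrite -lt0n; apply: leq_ltn_trans hp.
case: (gens_on_of_nonzero (distinct3_rotate pqr) hG hp0); rewrite -gens_on_sym => hs.
  have hmu : (h p <= mu G p q)%N.
    exact: (leq_bigmax_seq (F := fun m : 'X_{1..3} => m p) h hs).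
  by move: (leq_trans hmu (leq_trans mu_le (leq_trans (eq_leq w1g) gp))); rewrite leqNgt hp.
by move: hs hr; rewrite pr_gens inE => /eqP->; rewrite leqNgt gr.
Qed.

End Support2.

Theorem proposition4p8 (K : fieldType) (G : seq 'X_{1..3}) (i j k : 'I_3) :
  i != j -> j != k -> i != k ->
  support2_min_gens G ->
  is_edge G i j -> is_edge G j k -> is_edge G i k ->
  ((2 <= alpha G i j)%N -> (2 <= alpha G j k)%N ->
     is_ass_prime (in_mon_ideal G) (in_mon_ideal (K := K) max_ideal_gens)) /\
  (alpha G i k = 1%N -> alpha G j k = 1%N -> (2 <= alpha G i j)%N ->
     (~ is_ass_prime (in_mon_ideal G) (in_mon_ideal (K := K) max_ideal_gens) <->
      (mu G i j <= w1 G i k)%N /\ (mu G j i <= w1 G j k)%N)).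
Proof.
move=> ij jk ik G2 _ [_ Ejk] [_ Eik].
have ijk : distinct3 i j k by apply/and3P.
rewrite (ass_max_idealP K G2.1); split; first exact: (socle_of_thick_path G2 ijk).
move=> alpha_ik alpha_jk alpha_ij; split.
  move=> no_socle; split; rewrite leqNgt; apply/negP=> lt; apply: no_socle.
    exact: (socle_of_w1_lt_mu G2 ijk alpha_ij Eik lt).
  by apply: (socle_of_w1_lt_mu G2 (distinct3_swap ijk) _ Ejk lt); rewrite /alpha gens_on_sym.
move=> [mu_ij mu_ji] [u socu]; case/andP: (socu) => uI /forallP/(_ k)/hasP[g gG gu].
have gk : g k != 0%N.
  by rewrite -lt0n; apply: leq_ltn_trans (lepm_add1_gt gu (hasPn uI g gG)).
case: (gens_on_of_nonzero G2 ijk gG gk) => gs.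
  exact: (negP (socle_edge_gen_not_le G2 ijk socu alpha_ik mu_ij gs) gu).
exact: (negP (socle_edge_gen_not_le G2 (distinct3_swap ijk) socu alpha_jk mu_ji gs) gu).
Qed.
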